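(* Let $\bm\sigma=\sigma_1\bm e_1+\dots+\sigma_r\bm e_r\in\mathbb{Z}^r$ be a changemaker vector such that $L=\langle\bm\sigma\rangle^\perp\subseteq\mathbb{Z}^r$ admits an obtuse superbase. Suppose that for some $\ell\ge4$ and some $b>1$ the coefficients satisfy $\sigma_{b-1}<\sigma_b=\sigma_{b+1}=\dots=\sigma_{b+\ell-1}$. Then every $\sigma_k$ with $\sigma_k>\sigma_b$ satisfies $\sigma_k\ge(\ell-1)\sigma_b$.
   Context: $\mathbb{Z}^r$ has the standard pairing. A changemaker vector is $\bm\sigma=\sum\sigma_i\bm e_i$ with $\sigma_1=1$ and $\sigma_{i-1}\le\sigma_i\le1+\sigma_1+\dots+\sigma_{i-1}$ for $i\ge2$. An obtuse superbase of a rank-$k$ lattice is a spanning set $\{v_0,\dots,v_k\}$ with $v_i\cdot v_j\le0$ for $i\ne j$ and $\sum v_i=0$. *)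

From HB Require Import structures.
From mathcomp Require Import all_boot all_order all_algebra.
Set Implicit Arguments. Unset Strict Implicit. Unset Printing Implicit Defensive.
Import Order.TTheory GRing.Theory Num.Theory.
Local Open Scope ring_scope.

(* Vectors of Z^r are row vectors 'rV[int]_r; coordinates are 0-based in Rocq. *)

Definition dotZ (r : nat) (u v : 'rV[int]_r) : int := \sum_(i < r) u 0 i * v 0 i.

(* 1-based coordinate access: coord1 v i = v_i for 1 <= i <= r *)
Definition coord1 (r : nat) (v : 'rV[int]_r) (i : nat) : int :=
  match r as n return 'rV[int]_n -> int with
  | 0 => fun _ => 0
  | n.+1 => fun w => w 0 (inord i.-1)
  end v.

Definition changemaker (r : nat) (s : 'rV[int]_r) : Prop :=
  (0 < r)%N /\ coord1 s 1 = 1 /\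
  forall i : nat, (2 <= i <= r)%N ->
    coord1 s i.-1 <= coord1 s i /\
    coord1 s i <= 1 + \sum_(1 <= j < i) coord1 s j.

Definition in_perp (r : nat) (s x : 'rV[int]_r) : Prop := dotZ x s = 0.

Definition family_rank (r m : nat) (v : 'I_m -> 'rV[int]_r) : nat :=
  \rank (\matrix_(i < m, j < r) ((v i 0 j)%:~R : rat)).

Definition obtuse_superbase_perp (r : nat) (s : 'rV[int]_r) (k : nat)
    (v : 'I_k.+1 -> 'rV[int]_r) : Prop :=
  [/\ (forall i, in_perp s (v i)),
      (forall x, in_perp s x -> exists c : 'I_k.+1 -> int,
                   x = \sum_(i < k.+1) c i *: v i),
      family_rank v = k,
      (forall i j, i != j -> dotZ (v i) (v j) <= 0)
    & \sum_(i < k.+1) v i = 0].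

Definition has_obtuse_superbase_perp (r : nat) (s : 'rV[int]_r) : Prop :=
  exists k (v : 'I_k.+1 -> 'rV[int]_r), obtuse_superbase_perp s v.

From HB Require Import structures.
From mathcomp Require Import all_boot all_order all_algebra.
From mathcomp Require Import zify ring.
Set Implicit Arguments. Unset Strict Implicit. Unset Printing Implicit Defensive.
Import Order.TTheory GRing.Theory Num.Theory.
Local Open Scope ring_scope.

(* Let v_0, ..., v_n be an obtuse superbase of L = sigma^perp.  For
   x = sum c_i v_i and y = sum d_i v_i we have
   <x, y> = sum_(i < j) (- <v_i, v_j>) (c_i - c_j) (d_i - d_j), a weighted sum
   over the edges of the superbase graph.  Hence a vector of L that is not the
   sum of two nonzero vectors of L with non-negative pairing (an irreducible
   vector) is a cut sum_(i in U) v_i, and a cut of norm 2 crosses edges of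
   total weight 2.
   If sigma_b < sigma_k < (l - 1) sigma_b, the changemaker property lets us
   balance e_k, together with some coordinates before the block, minimally
   against between 2 and l - 2 coordinates of the block.  The resulting +-1
   vector w is irreducible, equal on two block coordinates f1, f2, equal on
   two other block coordinates f3, f4, but different on f1 and f3.  Comparing
   the cut of w with the cuts of the roots e_f1 - e_f2, e_f3 - e_f4 and
   e_f1 - e_f3 forces (e_f1 - e_f2) + (e_f3 - e_f4) to lie in 2L, which is
   absurd. *)

Section Pairing.
Variable r : nat.
Implicit Types (u v x : 'rV[int]_r) (a : int).

Lemma dotZC u v : dotZ u v = dotZ v u.
Proof. by apply: eq_bigr => i _; rewrite mulrC. Qed.

Lemma dotZDl u1 u2 v : dotZ (u1 + u2) v = dotZ u1 v + dotZ u2 v.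
Proof. by rewrite -big_split; apply: eq_bigr => i _; rewrite !mxE mulrDl. Qed.

Lemma dotZZl a u v : dotZ (a *: u) v = a * dotZ u v.
Proof. by rewrite mulr_sumr; apply: eq_bigr => i _; rewrite !mxE mulrA. Qed.

Lemma dotZBl u1 u2 v : dotZ (u1 - u2) v = dotZ u1 v - dotZ u2 v.
Proof. by rewrite dotZDl -scaleN1r dotZZl mulN1r. Qed.

Lemma dotZ0l v : dotZ 0 v = 0.
Proof. by rewrite /dotZ big1 // => i _; rewrite mxE mul0r. Qed.

Lemma dotZ_suml (I : finType) (P : pred I) (F : I -> 'rV[int]_r) v :
  dotZ (\sum_(i | P i) F i) v = \sum_(i | P i) dotZ (F i) v.
Proof. by elim/big_rec2: _ => [|i x y _ <-]; rewrite ?dotZ0l ?dotZDl. Qed.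

Lemma dotZDr u v1 v2 : dotZ u (v1 + v2) = dotZ u v1 + dotZ u v2.
Proof. by rewrite dotZC dotZDl !(dotZC u). Qed.

Lemma dotZ0r v : dotZ v 0 = 0.
Proof. by rewrite dotZC dotZ0l. Qed.

Lemma dotZZr a u v : dotZ u (a *: v) = a * dotZ u v.
Proof. by rewrite dotZC dotZZl dotZC. Qed.

Lemma dotZ_sumr (I : finType) (P : pred I) (F : I -> 'rV[int]_r) v :
  dotZ v (\sum_(i | P i) F i) = \sum_(i | P i) dotZ v (F i).
Proof. by rewrite dotZC dotZ_suml; apply: eq_bigr => i _; rewrite dotZC. Qed.

Lemma dotZ_delta (i : 'I_r) v : dotZ (delta_mx 0 i) v = v 0 i.
Proof.
rewrite /dotZ (bigD1 i) //= big1 ?addr0 => [|j /negPf ji]; rewrite mxE ?ji ?andbF ?mul0r //.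
by rewrite !eqxx mul1r.
Qed.

Lemma dotZ_eq0 x : dotZ x x = 0 -> x = 0.
Proof.
move=> x0; apply/rowP => i; rewrite mxE.
have sq_ge0 j : true -> 0 <= x 0 j * x 0 j by rewrite -expr2 sqr_ge0.
by have /eqP := psumr_eq0P sq_ge0 x0 (i := i) isT; rewrite mulf_eq0 orbb => /eqP.
Qed.

Lemma perp_norm_ge2 (s x : 'rV[int]_r) :
  (forall i, 0 < s 0 i) -> dotZ x s = 0 -> x != 0 -> 2 <= dotZ x x.
Proof.
move=> s_gt0 xs x_neq0.
have [i xi] : exists i, x 0 i != 0.
  apply/existsP; apply: contraR x_neq0 => /existsPn x0.
  by apply/eqP/rowP => j; rewrite mxE; apply/eqP/negbNE/x0.
have [j ji xj] : exists2 j, j != i & x 0 j != 0.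
  apply/exists_inP; apply: contra_eqT xs => /exists_inPn x0.
  rewrite /dotZ (bigD1 i) //= big1 ?addr0 => [|j /x0 /negbNE /eqP ->]; last by rewrite mul0r.
  by rewrite mulf_eq0 negb_or xi gt_eqF.
have sq_ge1 k : x 0 k != 0 -> 1 <= x 0 k * x 0 k by case: (x 0 k) => [[|?]|?]; lia.
rewrite /dotZ (bigD1 i) //= (bigD1 j) //= addrA ler_wpDr //.
  by apply: sumr_ge0 => k _; rewrite -expr2 sqr_ge0.
by have := lerD (sq_ge1 _ xi) (sq_ge1 _ xj).
Qed.

End Pairing.

Lemma sum_sym_halve m (H : 'I_m -> 'I_m -> int) :
  (forall i j, H i j = H j i) -> (forall i, H i i = 0) ->
  \sum_i \sum_j H i j = 2 * \sum_(i < m) \sum_(j < m | (i < j)%N) H i j.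
Proof.
move=> Hsym Hdiag.
have -> : \sum_i \sum_j H i j =
    \sum_(i < m) \sum_(j < m) (if (i < j)%N then H i j else 0)
  + \sum_(i < m) \sum_(j < m) (if (j < i)%N then H j i else 0).
  rewrite -big_split; apply: eq_bigr => i _; rewrite -big_split; apply: eq_bigr => j _ /=.
  by case: ltngtP => [||/val_inj ->]; rewrite ?addr0 ?add0r ?Hdiag // => _; apply: Hsym.
rewrite [X in _ + X]exchange_big -mulr2n mulr_natl.
by congr (_ *+ 2); apply: eq_bigr => i _; rewrite [RHS]big_mkcond.
Qed.

Section SuperbaseCalculus.
Variables (r n : nat) (v : 'I_n.+1 -> 'rV[int]_r).
Hypothesis sum_v : \sum_u v u = 0.
Hypothesis obtuse_v : forall i j, i != j -> dotZ (v i) (v j) <= 0.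
Implicit Types (a : int) (i j : 'I_n.+1) (c d : 'I_n.+1 -> int)
  (F G : 'I_n.+1 -> 'I_n.+1 -> int).

Definition combo (c : 'I_n.+1 -> int) : 'rV[int]_r := \sum_u c u *: v u.

Definition weight (i j : 'I_n.+1) : int := - dotZ (v i) (v j).

Definition edge_sum (F : 'I_n.+1 -> 'I_n.+1 -> int) : int :=
  \sum_(i < n.+1) \sum_(j < n.+1 | (i < j)%N) weight i j * F i j.

Lemma combo_const a : combo (fun=> a) = 0.
Proof. by rewrite /combo -scaler_sumr sum_v scaler0. Qed.

Lemma comboD c d : combo (fun u => c u + d u) = combo c + combo d.
Proof. by rewrite /combo -big_split; apply: eq_bigr => u _; rewrite scalerDl. Qed.

Lemma comboZ a c : combo (fun u => a * c u) = a *: combo c.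
Proof. by rewrite /combo scaler_sumr; apply: eq_bigr => u _; rewrite scalerA. Qed.

Lemma eq_combo c d : c =1 d -> combo c = combo d.
Proof. by move=> cd; apply: eq_bigr => u _; rewrite cd. Qed.

(* The rows and columns of the Gram matrix G of v sum to 0, so
   sum_(i, j) G_ij (c_i - c_j) (d_i - d_j) = -2 <combo c, combo d>. *)
Lemma dotZ_combo c d :
  dotZ (combo c) (combo d) = edge_sum (fun i j => (c i - c j) * (d i - d j)).
Proof.
set G := fun i j => dotZ (v i) (v j).
have rowG i : \sum_j G i j = 0 by rewrite -dotZ_sumr sum_v dotZ0r.
have colG j : \sum_i G i j = 0 by rewrite -dotZ_suml sum_v dotZ0l.
have bilin : dotZ (combo c) (combo d) = \sum_i \sum_j c i * d j * G i j.
  rewrite dotZ_suml; apply: eq_bigr => i _; rewrite dotZZl dotZ_sumr mulr_sumr.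
  by apply: eq_bigr => j _; rewrite dotZZr mulrA.
have expand : \sum_i \sum_j weight i j * ((c i - c j) * (d i - d j))
    = 2 * dotZ (combo c) (combo d).
  have E i j : weight i j * ((c i - c j) * (d i - d j)) =
      c i * d j * G i j + c j * d i * G j i - c i * d i * G i j - c j * d j * G i j.
    by rewrite /weight /G (dotZC (v j)); ring.
  under eq_bigr => i _ do under eq_bigr => j _ do rewrite E.
  under eq_bigr => i _ do rewrite !sumrB big_split /=.
  rewrite !sumrB big_split /=.
  have -> : \sum_i \sum_j c i * d i * G i j = 0.
    by rewrite big1 // => i _; rewrite -mulr_sumr rowG mulr0.
  have -> : \sum_i \sum_j c j * d j * G i j = 0.
    by rewrite exchange_big big1 // => j _; rewrite -mulr_sumr colG mulr0.
  rewrite !subr0 [X in _ + X]exchange_big /= -bilin.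
  by rewrite mulr2n mulrDl mul1r.
rewrite sum_sym_halve in expand => [|i j|i]; last by rewrite !subrr mul0r mulr0.
  by apply: (@mulfI _ 2) => //; rewrite -expand.
by rewrite /weight dotZC; ring.
Qed.

Lemma weight_ge0 i j : i != j -> 0 <= weight i j.
Proof. by move=> ij; rewrite oppr_ge0 obtuse_v. Qed.

Lemma eq_edge_sum F G :
  (forall i j, (i < j)%N -> F i j = G i j) -> edge_sum F = edge_sum G.
Proof. by move=> FG; apply: eq_bigr => i _; apply: eq_bigr => j ij; rewrite FG. Qed.

Lemma edge_sumD F G : edge_sum (fun i j => F i j + G i j) = edge_sum F + edge_sum G.
Proof.
rewrite -big_split; apply: eq_bigr => i _; rewrite -big_split.
by apply: eq_bigr => j _; rewrite mulrDr.
Qed.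

Lemma edge_sumZ a F : edge_sum (fun i j => a * F i j) = a * edge_sum F.
Proof.
rewrite mulr_sumr; apply: eq_bigr => i _; rewrite mulr_sumr.
by apply: eq_bigr => j _; rewrite mulrCA.
Qed.

Lemma edge_sumN F : edge_sum (fun i j => - F i j) = - edge_sum F.
Proof.
rewrite -sumrN; apply: eq_bigr => i _; rewrite -sumrN.
by apply: eq_bigr => j _; rewrite mulrN.
Qed.

Lemma ler_edge_sum F G :
  (forall i j, (i < j)%N -> F i j <= G i j) -> edge_sum F <= edge_sum G.
Proof.
move=> FG; apply: ler_sum => i _; apply: ler_sum => j ij.
by rewrite ler_wpM2l ?FG ?weight_ge0 // neq_ltn ij.
Qed.

Lemma edge_sum_ge0 F : (forall i j, (i < j)%N -> 0 <= F i j) -> 0 <= edge_sum F.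
Proof.
move=> F0; apply: sumr_ge0 => i _; apply: sumr_ge0 => j ij.
by rewrite mulr_ge0 ?F0 ?weight_ge0 // neq_ltn ij.
Qed.

End SuperbaseCalculus.

Definition perp_irreducible r (s x : 'rV[int]_r) := forall y z : 'rV[int]_r,
  dotZ y s = 0 -> dotZ z s = 0 -> x = y + z -> 0 <= dotZ y z -> y = 0 \/ z = 0.

Lemma norm2_irreducible r (s x : 'rV[int]_r) :
  (forall i, 0 < s 0 i) -> dotZ x x = 2 -> perp_irreducible s x.
Proof.
move=> s_gt0 xx y z ys zs xyz yz.
case: (y =P 0) => [|/eqP y0]; first by left.
case: (z =P 0) => [|/eqP z0]; first by right.
have := perp_norm_ge2 s_gt0 ys y0; have := perp_norm_ge2 s_gt0 zs z0.
by move: xx; rewrite xyz dotZDl !dotZDr (dotZC z y); lia.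
Qed.

Definition b2z (b : bool) : int := if b then 1 else 0.

Definition crossing n (U : 'I_n.+1 -> bool) (i j : 'I_n.+1) : int :=
  b2z (U i != U j).

Definition co_crossing n (U X : 'I_n.+1 -> bool) (i j : 'I_n.+1) : int :=
  crossing U i j * crossing X i j.

Definition crossing_sign n (U X : 'I_n.+1 -> bool) (i j : 'I_n.+1) : int :=
  (b2z (U i) - b2z (U j)) * (b2z (X i) - b2z (X j)).

Ltac crossing_cases :=
  rewrite /co_crossing /crossing_sign /crossing /b2z;
  repeat match goal with |- context [?U ?i] =>
    is_var U; is_var i; lazymatch type of (U i) with bool => case: (U i) end
  end.

Section PositiveSetSums.
Variables (I : finType) (f : I -> int).
Hypothesis f_gt0 : forall i, 0 < f i.
Implicit Types T N : {set I}.

Lemma sum_set_ge_mem T j : j \in T -> f j <= \sum_(i in T) f i.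
Proof. by move=> jT; rewrite (bigD1 j) //= lerDl sumr_ge0 // => i _; apply: ltW. Qed.

Lemma sum_set_eq0 T : \sum_(i in T) f i = 0 -> T = set0.
Proof.
move=> T0; apply/setP => j; rewrite inE; apply/negbTE/negP => jT.
by have := sum_set_ge_mem jT; rewrite T0 leNgt f_gt0.
Qed.

Lemma sum_setD T N : T \subset N ->
  \sum_(i in N) f i = \sum_(i in T) f i + \sum_(i in N :\: T) f i.
Proof. by move=> TN; rewrite (big_setID T) /= (setIidPr TN). Qed.

Lemma sum_subset_le T N : T \subset N -> \sum_(i in T) f i <= \sum_(i in N) f i.
Proof. by move=> TN; rewrite (sum_setD TN) lerDl sumr_ge0 // => i _; apply: ltW. Qed.

Lemma sum_subset_eq T N : T \subset N -> \sum_(i in T) f i = \sum_(i in N) f i -> T = N.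
Proof.
move=> TN sTN; apply/eqP; rewrite eqEsubset TN /=.
have /sum_set_eq0 /setP NT0 : \sum_(i in N :\: T) f i = 0.
  by move: sTN; rewrite (sum_setD TN); lia.
by apply/subsetP => j jN; apply/negPn/negP => jT; have := NT0 j; rewrite !inE jT jN.
Qed.

Lemma sum_subset_lt T N j : T \subset N -> j \in N -> j \notin T ->
  \sum_(i in T) f i + f j <= \sum_(i in N) f i.
Proof.
move=> TN jN jT; rewrite (sum_setD TN) lerD2l sum_set_ge_mem //.
by rewrite inE jT jN.
Qed.

End PositiveSetSums.

Definition pm_vec r (P N : {set 'I_r}) : 'rV[int]_r :=
  \row_j ((j \in P)%:R - (j \in N)%:R).

Lemma dotZ_pm_vec r (P N : {set 'I_r}) (x : 'rV[int]_r) :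
  dotZ (pm_vec P N) x = \sum_(i in P) x 0 i - \sum_(i in N) x 0 i.
Proof.
rewrite /dotZ !(big_mkcond (fun i => i \in _)) -sumrB; apply: eq_bigr => i _.
by rewrite mxE; case: (i \in P); case: (i \in N); rewrite /= ?mul1r ?mul0r ?subr0 ?mulN1r ?subrr ?sub0r.
Qed.

Definition minimal_balanced r (s : 'rV[int]_r) (P N : {set 'I_r}) :=
  [/\ [disjoint P & N], \sum_(i in P) s 0 i = \sum_(i in N) s 0 i
    & forall T T' : {set 'I_r}, T \subset P -> T' \subset N ->
        \sum_(i in T) s 0 i = \sum_(i in T') s 0 i ->
        (T = set0 /\ T' = set0) \/ (T = P /\ T' = N)].

Section MinimalBalanced.
Variables (r : nat) (s : 'rV[int]_r).
Hypothesis s_gt0 : forall i, 0 < s 0 i.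
Implicit Types P N : {set 'I_r}.

Lemma minimal_balancedU1 k P N :
  k \notin P -> [disjoint k |: P & N] ->
  \sum_(i in k |: P) s 0 i = \sum_(i in N) s 0 i ->
  (forall j, j \in N -> \sum_(i in N) s 0 i - s 0 j < s 0 k) ->
  (forall j, j \in N -> \sum_(i in P) s 0 i < s 0 j) ->
  minimal_balanced s (k |: P) N.
Proof.
move=> kP disj bal N_small P_small; split => // T T' TkP T'N sTT'.
have [kT|kT] := boolP (k \in T).
  have T'N_eq : T' = N.
    apply/eqP; rewrite eqEsubset T'N; apply/subsetP => j jN; apply/negPn/negP => jT'.
    have /= := sum_subset_lt s_gt0 T'N jN jT'; have /= := sum_set_ge_mem s_gt0 kT.
    have := N_small j jN; rewrite sTT'.
    by move: (\sum_(i in T') _) (\sum_(i in N) _) => A B; lia.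
  by right; split => //; apply: (sum_subset_eq s_gt0 TkP); rewrite sTT' T'N_eq bal.
have TP : T \subset P.
  apply/subsetP => j jT; have := subsetP TkP j jT; rewrite !inE => /predU1P [ejk|//].
  by move: kT; rewrite -ejk jT.
have T'0 : T' = set0.
  apply/setP => j; rewrite inE; apply/negbTE/negP => jT'.
  have /= := sum_set_ge_mem s_gt0 jT'; have /= := sum_subset_le s_gt0 TP.
  have := P_small j (subsetP T'N j jT'); rewrite sTT'.
  by move: (\sum_(i in T') _) (\sum_(i in P) _) => A B; lia.
by left; split => //; apply: (sum_set_eq0 s_gt0); rewrite sTT' T'0 big_set0.
Qed.

Lemma minimal_balanced_irreducible P N :
  minimal_balanced s P N -> perp_irreducible s (pm_vec P N).
Proof.
case=> disj _ minPN y z ys zs Eyz yz.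
have wE j : pm_vec P N 0 j = y 0 j + z 0 j by rewrite Eyz mxE.
have yz_le0 j : y 0 j * z 0 j <= 0.
  have := wE j; rewrite mxE.
  by case: (boolP (j \in P)) => [/(disjointFr disj) -> | _]; case: (j \in N) => /=; nia.
have yz0 j : y 0 j * z 0 j = 0.
  have sum0 : \sum_j - (y 0 j * z 0 j) = 0.
    by apply/eqP; rewrite sumrN oppr_eq0 eq_le yz andbT sumr_le0.
  have ge0 i : true -> 0 <= - (y 0 i * z 0 i) by rewrite oppr_ge0.
  by have /eqP := psumr_eq0P ge0 sum0 (i := j) isT; rewrite oppr_eq0 => /eqP.
pose T := [set j in P | y 0 j != 0]; pose T' := [set j in N | y 0 j != 0].
have yT : y = pm_vec T T'.
  apply/rowP => j; rewrite !mxE !inE; have := wE j; have := yz0 j; rewrite mxE.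
  case: (boolP (j \in P)) => [/[dup] jP /(disjointFr disj) -> | _];
  case: (j \in N); case: (y 0 j =P 0) => [-> | /eqP yj] //=;
  by move/eqP; rewrite mulf_eq0 (negPf yj) /= => /eqP ->; lia.
have TP : T \subset P by apply/subsetP => j; rewrite inE => /andP [].
have T'N : T' \subset N by apply/subsetP => j; rewrite inE => /andP [].
have [[eT eT'] | [eT eT']] := minPN T T' TP T'N
  (ltac:(by apply/eqP; rewrite -subr_eq0 -dotZ_pm_vec -yT ys)).
  by left; rewrite yT eT eT'; apply/rowP => j; rewrite !mxE !inE subrr.
right; apply/rowP => j; have := wE j; rewrite -eT -eT' -yT mxE; lia.
Qed.

End MinimalBalanced.

Definition root_vec r (a b : 'I_r) : 'rV[int]_r := delta_mx 0 a - delta_mx 0 b.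

Lemma root_vecE r (a b c : 'I_r) : root_vec a b 0 c = (c == a)%:R - (c == b)%:R.
Proof. by rewrite !mxE. Qed.

Lemma dotZ_root_vec r (a b : 'I_r) x : dotZ (root_vec a b) x = x 0 a - x 0 b.
Proof. by rewrite dotZBl !dotZ_delta. Qed.

Section Cuts.
Variables (r n : nat) (v : 'I_n.+1 -> 'rV[int]_r).
Hypothesis sum_v : \sum_u v u = 0.
Hypothesis obtuse_v : forall i j, i != j -> dotZ (v i) (v j) <= 0.
Implicit Types (U X Y Z : 'I_n.+1 -> bool) (c : 'I_n.+1 -> int) (lo : int).

Local Notation edge_sum := (edge_sum v).

Definition cut U := combo v (fun u => b2z (U u)).

Lemma dotZ_cut U X : dotZ (cut U) (cut X) = edge_sum (crossing_sign U X).
Proof. exact: dotZ_combo. Qed.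

Lemma normZ_cut U : dotZ (cut U) (cut U) = edge_sum (crossing U).
Proof. by rewrite dotZ_cut; apply: eq_edge_sum => i j _; crossing_cases. Qed.

Lemma co_crossing_ge1 U X :
  dotZ (cut U) (cut X) != 0 -> 1 <= edge_sum (co_crossing U X).
Proof.
rewrite dotZ_cut => UX.
have le_co : edge_sum (crossing_sign U X) <= edge_sum (co_crossing U X).
  by apply: ler_edge_sum => // i j _; crossing_cases.
have le_coN : - edge_sum (crossing_sign U X) <= edge_sum (co_crossing U X).
  by rewrite -edge_sumN; apply: ler_edge_sum => // i j _; crossing_cases.
lia.
Qed.

(* Edges of Z crossed by U, X or Y: since U shares no edge with X or Y, the
   only overlaps are edges crossed by X, Y and Z, so X and Y share an edge;
   orthogonality makes their shared part even, hence equal to both norms. *)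
Lemma cut_xor_null U X Y Z :
  edge_sum (crossing X) = 2 -> edge_sum (crossing Y) = 2 ->
  edge_sum (crossing Z) = 2 ->
  dotZ (cut X) (cut Y) = 0 -> dotZ (cut X) (cut Z) != 0 ->
  dotZ (cut Y) (cut Z) != 0 -> dotZ (cut U) (cut Z) != 0 ->
  edge_sum (co_crossing U X) = 0 -> edge_sum (co_crossing U Y) = 0 ->
  cut (fun u => X u (+) Y u) = 0.
Proof.
move=> nX nY nZ XY XZ YZ UZ UX UY.
have XZ1 := co_crossing_ge1 XZ.
have YZ1 := co_crossing_ge1 YZ.
have UZ1 := co_crossing_ge1 UZ.
set T := edge_sum (fun i j => crossing X i j * crossing Y i j * crossing Z i j).
have Zcover : edge_sum (co_crossing U Z) + edge_sum (co_crossing X Z)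
    + edge_sum (co_crossing Y Z) - T
    <= edge_sum (crossing Z) + edge_sum (co_crossing U X) + edge_sum (co_crossing U Y).
  by rewrite /T -edge_sumN -!edge_sumD; apply: ler_edge_sum => // i j _; crossing_cases.
set S := edge_sum (co_crossing X Y).
have TS : T <= S by apply: ler_edge_sum => // i j _; crossing_cases.
have S_even : S = 2 * edge_sum (fun i j => b2z [&& X i != X j, Y i != Y j & X i == Y i]).
  rewrite dotZ_cut in XY.
  rewrite -edge_sumZ -[S]addr0 -XY -edge_sumD; apply: eq_edge_sum => i j _.
  by crossing_cases.
have SX : S <= edge_sum (crossing X) by apply: ler_edge_sum => // i j _; crossing_cases.
have S2 : S = 2 by lia.
have nXY : edge_sum (crossing (fun u => X u (+) Y u))
    = edge_sum (crossing X) + edge_sum (crossing Y) - 2 * S.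
  rewrite /S -edge_sumZ -edge_sumN -!edge_sumD; apply: eq_edge_sum => i j _.
  by crossing_cases.
by apply: dotZ_eq0; rewrite normZ_cut nXY nX nY S2.
Qed.

Section PerpLattice.
Variable s : 'rV[int]_r.
Hypothesis perp_v : forall i, dotZ (v i) s = 0.

Lemma combo_perp c : dotZ (combo v c) s = 0.
Proof. by rewrite dotZ_suml big1 // => i _; rewrite dotZZl perp_v mulr0. Qed.

(* Split c = lo + [lo < c] + c': the two non-constant parts pair non-negatively. *)
Lemma irreducible_combo_cut_bounded N lo c :
  (forall u, lo <= c u <= lo + N%:Z) -> perp_irreducible s (combo v c) ->
  exists U, combo v c = cut U.
Proof.
elim: N lo c => [|N IH] lo c c_bd irr.
  exists (fun=> false).
  rewrite (@eq_combo _ _ v c (fun=> lo)) => [|u]; last by have := c_bd u; lia.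
  by rewrite combo_const // /cut (@eq_combo _ _ v _ (fun=> 0)) // combo_const.
set c1 := fun u => b2z (lo < c u).
set c2 := fun u => c u - lo - c1 u.
have Ec : combo v c = combo v c1 + combo v c2.
  rewrite -comboD (@eq_combo _ _ v _ (fun u => (c1 u + c2 u) + lo)) => [|u]; last first.
    by rewrite /c2; ring.
  by rewrite comboD combo_const // addr0.
have c12 : 0 <= dotZ (combo v c1) (combo v c2).
  rewrite dotZ_combo //; apply: edge_sum_ge0 => // i j _.
  rewrite /c2 /c1 /b2z; have := c_bd i; have := c_bd j.
  by case: ifP => /= h1; case: ifP => /= h2; nia.
have [c1_0|c2_0] := irr _ _ (combo_perp c1) (combo_perp c2) Ec c12.
  have [U c2U] : exists U, combo v c2 = cut U.
    apply: (IH 0) => [u|]; last by rewrite -[combo v c2]add0r -c1_0 -Ec.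
    by rewrite /c2 /c1 /b2z; have := c_bd u; case: ifP => /=; lia.
  by exists U; rewrite Ec c1_0 add0r.
by exists (fun u => lo < c u); rewrite Ec c2_0 addr0.
Qed.

Lemma irreducible_combo_cut c :
  perp_irreducible s (combo v c) -> exists U, combo v c = cut U.
Proof.
move=> irr; pose S : int := \sum_u `|c u|.
have cS u : `|c u| <= S by rewrite /S (bigD1 u) //= lerDl sumr_ge0.
have S_ge0 : 0 <= S by rewrite sumr_ge0.
have c_bd u : - S <= c u <= - S + (absz (2 * S))%:Z.
  by rewrite gez0_abs ?mulr_ge0 //; have := cS u; rewrite ler_norml; lia.
exact: irreducible_combo_cut_bounded c_bd irr.
Qed.

(* If some edge crossing X also crossed U, then norm X = 2 would force X to
   split cut U into two orthogonal nonzero cuts. *)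
Lemma orthogonal_cuts_disjoint U X :
  perp_irreducible s (cut U) -> edge_sum (crossing X) = 2 ->
  dotZ (cut U) (cut X) = 0 -> edge_sum (co_crossing U X) = 0.
Proof.
rewrite dotZ_cut => irrU normX UX.
set G := edge_sum (co_crossing U X).
have G_ge0 : 0 <= G.
  by apply: edge_sum_ge0 => // i j _; crossing_cases.
have G_even : G = 2 * edge_sum (fun i j => b2z [&& U i != U j, X i != X j & U i == X i]).
  rewrite -edge_sumZ -[G]addr0 -UX -edge_sumD; apply: eq_edge_sum => i j _.
  by crossing_cases.
case: (G =P 0) => // /eqP G_neq0.
set inU := edge_sum (fun i j => b2z (U i && U j) * crossing X i j).
set outU := edge_sum (fun i j => b2z (~~ U i && ~~ U j) * crossing X i j).
have split_X : edge_sum (crossing X) = inU + outU + G.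
  rewrite /inU /outU /G -!edge_sumD; apply: eq_edge_sum => i j _.
  by crossing_cases.
have inU_ge0 : 0 <= inU.
  by apply: edge_sum_ge0 => // i j _; crossing_cases.
have outU_ge0 : 0 <= outU.
  by apply: edge_sum_ge0 => // i j _; crossing_cases.
have inU0 : inU = 0 by lia.
set x := cut (fun u => U u && X u).
set y := cut (fun u => U u && ~~ X u).
have Uxy : cut U = x + y.
  rewrite /x /y /cut -comboD; apply: eq_combo => u.
  by rewrite /b2z; case: (U u); case: (X u).
have xy : dotZ x y = 0.
  rewrite /x /y dotZ_cut -oppr0 -inU0 -edge_sumN; apply: eq_edge_sum => i j _.
  by crossing_cases.
have xx : G <= 2 * dotZ x x.
  rewrite /x dotZ_cut -edge_sumZ -[G]addr0 -UX -edge_sumD; apply: ler_edge_sum => // i j _.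
  by crossing_cases.
have yy : G <= 2 * dotZ y y.
  rewrite /y dotZ_cut -edge_sumZ -[G]subr0 -UX -edge_sumN -edge_sumD.
  by apply: ler_edge_sum => // i j _; crossing_cases.
have xy_ge0 : 0 <= dotZ x y by rewrite xy.
have [x0|y0] := irrU x y (combo_perp _) (combo_perp _) Uxy xy_ge0.
- by move: xx; rewrite x0 dotZ0l; lia.
- by move: yy; rewrite y0 dotZ0l; lia.
Qed.

Section Separation.
Hypothesis span_v : forall x, dotZ x s = 0 -> exists c, x = combo v c.
Hypothesis s_gt0 : forall i, 0 < s 0 i.

Lemma irreducible_cut x : dotZ x s = 0 -> perp_irreducible s x -> exists U, x = cut U.
Proof.
by move=> xs; have [c ->] := span_v xs; apply: irreducible_combo_cut.
Qed.

Lemma root_vec_cut a b : a != b -> s 0 a = s 0 b ->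
  exists U, root_vec a b = cut U /\ edge_sum (crossing U) = 2.
Proof.
move=> ab sab.
have rs : dotZ (root_vec a b) s = 0 by rewrite dotZ_root_vec sab subrr.
have rr : dotZ (root_vec a b) (root_vec a b) = 2.
  by rewrite dotZ_root_vec !root_vecE !eqxx (negPf ab) eq_sym (negPf ab).
have [U rU] := irreducible_cut rs (norm2_irreducible s_gt0 rr).
by exists U; rewrite -normZ_cut -rU.
Qed.

(* The roots e_f1 - e_f2, e_f3 - e_f4, e_f1 - e_f3 are cuts X, Y, Z of norm 2
   and the cut U of w shares no edge with X or Y; then cut_xor_null gives
   cut X + cut Y = 2 cut (X && Y), which fails at coordinate f1. *)
Lemma irreducible_no_pair_separation f1 f2 f3 f4 w :
  f1 != f2 -> f3 != f4 -> s 0 f1 = s 0 f2 -> s 0 f3 = s 0 f4 -> s 0 f1 = s 0 f3 ->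
  dotZ w s = 0 -> perp_irreducible s w ->
  w 0 f1 = w 0 f2 -> w 0 f3 = w 0 f4 -> w 0 f1 != w 0 f3 -> False.
Proof.
move=> n12 n34 s12 s34 s13 ws irr w12 w34 w13.
have n13 : f1 != f3 by apply: contraNneq w13 => ->.
have n14 : f1 != f4 by apply: contraNneq w13 => ->; rewrite w34.
have n23 : f2 != f3 by apply: contraNneq w13 => <-; rewrite w12.
have n24 : f2 != f4 by apply: contraNneq w13 => e; rewrite w12 e -w34.
have neqE := (negPf n12, negPf n13, negPf n14, negPf n23, negPf n24, negPf n34,
  eq_sym f2 f1, eq_sym f3 f1, eq_sym f4 f1, eq_sym f4 f3).
have [X [rX nX]] := root_vec_cut n12 s12.
have [Y [rY nY]] := root_vec_cut n34 s34.
have [Z [rZ nZ]] := root_vec_cut n13 s13.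
have [U wU] := irreducible_cut ws irr.
have XY : dotZ (cut X) (cut Y) = 0.
  by rewrite -rX -rY dotZ_root_vec !root_vecE ?neqE !subrr.
have XZ : dotZ (cut X) (cut Z) != 0.
  by rewrite -rX -rZ dotZ_root_vec !root_vecE !eqxx ?neqE.
have YZ : dotZ (cut Y) (cut Z) != 0.
  by rewrite -rY -rZ dotZ_root_vec !root_vecE !eqxx ?neqE.
have UZ : dotZ (cut U) (cut Z) != 0.
  by rewrite -wU -rZ dotZC dotZ_root_vec subr_eq0.
have UX : dotZ (cut U) (cut X) = 0.
  by rewrite -wU -rX dotZC dotZ_root_vec w12 subrr.
have UY : dotZ (cut U) (cut Y) = 0.
  by rewrite -wU -rY dotZC dotZ_root_vec w34 subrr.
have irrU : perp_irreducible s (cut U) by rewrite -wU.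
have XYnull := cut_xor_null nX nY nZ XY XZ YZ UZ
  (orthogonal_cuts_disjoint irrU nX UX)
  (orthogonal_cuts_disjoint irrU nY UY).
have sum_roots : root_vec f1 f2 + root_vec f3 f4 = 2 *: cut (fun u => X u && Y u).
  rewrite rX rY -[RHS]add0r -XYnull /cut -comboZ -!comboD; apply: eq_combo => u.
  by rewrite /b2z; case: (X u); case: (Y u).
have /= := congr1 (fun x : 'rV[int]_r => x 0 f1) sum_roots.
by rewrite mxE [RHS]mxE !root_vecE !eqxx ?neqE; lia.
Qed.

Lemma no_minimal_balanced_block_split (B P N : {set 'I_r}) sb :
  (forall j, j \in B -> s 0 j = sb) -> minimal_balanced s P N ->
  (1 < #|B :&: N|)%N -> (1 < #|B :\: (P :|: N)|)%N -> False.
Proof.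
move=> sB mb /card_gt1P [f1 [f2 [+ + n12]]] /card_gt1P [f3 [f4 [+ + n34]]].
rewrite !inE !negb_or => /andP [f1B f1N] /andP [f2B f2N].
move=> /andP [/andP [f3P f3N] f3B] /andP [/andP [f4P f4N] f4B].
have [disj bal _] := mb.
have w_in j : j \in N -> pm_vec P N 0 j = -1 by move=> jN; rewrite mxE (disjointFl disj jN) jN.
have w_out j : j \notin P -> j \notin N -> pm_vec P N 0 j = 0.
  by move=> /negPf jP /negPf jN; rewrite mxE jP jN subrr.
apply: (irreducible_no_pair_separation n12 n34 (w := pm_vec P N)).
1-3: by rewrite !sB.
- by rewrite dotZ_pm_vec bal subrr.
- exact: minimal_balanced_irreducible.
- by rewrite !w_in.
- by rewrite !w_out.
- by rewrite w_in // w_out.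
Qed.

End Separation.

End PerpLattice.

End Cuts.

Lemma coord1_ord r (s : 'rV[int]_r) (i : 'I_r) : coord1 s i.+1 = s 0 i.
Proof.
case: r s i => [|r] s [i lt_ir] //=.
by congr (s 0 _); apply: val_inj; rewrite /= inordK.
Qed.

Lemma sum_coord1 r (s : 'rV[int]_r) m : (m <= r)%N ->
  \sum_(1 <= j < m.+1) coord1 s j = \sum_(i < r | (i < m)%N) s 0 i.
Proof.
move=> mr; rewrite big_add1 /= big_mkord (big_ord_widen r (fun j => coord1 s j.+1)) //.
by apply: eq_bigr => i _; rewrite coord1_ord.
Qed.

Lemma changemaker_ord r (s : 'rV[int]_r) : changemaker s ->
  [/\ forall i j : 'I_r, (i <= j)%N -> s 0 i <= s 0 j,
      forall i : 'I_r, 0 < s 0 i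
    & forall j : 'I_r, s 0 j <= 1 + \sum_(i < r | (i < j)%N) s 0 i].
Proof.
case=> r_gt0 [s1 cm].
pose g m := coord1 s m.+1.
have g_step m : (m.+1 < r)%N -> g m <= g m.+1 by move=> lt_mr; have [] := cm m.+2 (ltac:(lia)).
have g_mono i j : (i <= j < r)%N -> g i <= g j.
  elim: j => [|j IH] /andP [ij jr]; first by have -> : i = 0%N by lia.
  have [->|lt_ij] := eqVneq i j.+1; first by [].
  by apply: le_trans (IH _) (g_step _ _); lia.
have mono (i j : 'I_r) : (i <= j)%N -> s 0 i <= s 0 j.
  by move=> ij; rewrite -!coord1_ord; apply: g_mono; rewrite ij ltn_ord.
split=> // [i | j].
  have := g_mono 0%N i (ltn_ord i); rewrite /g s1 coord1_ord; exact: lt_le_trans ltr01.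
rewrite -coord1_ord -sum_coord1 1?ltnW //; case: (posnP j) => [->|j_gt0].
  by rewrite s1 big_geq.
by have [] := cm j.+1 (ltac:(have := ltn_ord j; lia)).
Qed.

Lemma prefix_subset_sum r (f : 'I_r -> int) :
  (forall j : 'I_r, f j <= 1 + \sum_(i < r | (i < j)%N) f i) ->
  forall b t, (b <= r)%N -> 0 <= t <= \sum_(i < r | (i < b)%N) f i ->
  exists2 P : {set 'I_r}, P \subset [set i : 'I_r | (i < b)%N] & \sum_(i in P) f i = t.
Proof.
move=> f_small; elim=> [|b IH] t br /andP [t_ge0 t_le].
  exists set0; first exact: sub0set.
  rewrite big_pred0 in t_le => [|i]; last exact: ltn0.
  by apply/eqP; rewrite big_set0 eq_le t_ge0 t_le.
pose jb := Ordinal br.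
have sum_split : \sum_(i < r | (i < b.+1)%N) f i = \sum_(i < r | (i < b)%N) f i + f jb.
  rewrite (bigD1 jb) //= addrC; congr (_ + _); apply: eq_bigl => i.
  by rewrite ltnS -val_eqE /= ltn_neqAle andbC.
have [t_small | t_big] := lerP t (\sum_(i < r | (i < b)%N) f i).
  have [P Pb sP] := IH t (ltnW br) (introT andP (conj t_ge0 t_small)).
  by exists P => //; apply: subset_trans Pb _; apply/subsetP => i; rewrite !inE => /leqW.
have t' : 0 <= t - f jb <= \sum_(i < r | (i < b)%N) f i.
  move: t_le (f_small jb); rewrite sum_split /=.
  have -> : \sum_(i < r | (i < jb)%N) f i = \sum_(i < r | (i < b)%N) f i by [].
  by move: t_big; move: (\sum_(i < r | (i < b)%N) f i) => S; lia.
have [P Pb sP] := IH _ (ltnW br) t'.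
have jbP : jb \notin P by apply/negP => /(subsetP Pb); rewrite inE ltnn.
exists (jb |: P); last by rewrite big_setU1 //= sP addrC subrK.
by apply/subsetP => i; rewrite !inE => /predU1P [-> //| /(subsetP Pb)]; rewrite inE => /leqW.
Qed.

Lemma exists_subset_card (T : finType) (B : {set T}) m :
  (m <= #|B|)%N -> exists2 A : {set T}, A \subset B & #|A| = m.
Proof.
move=> /card_geqP [xs [uniq_xs size_xs xsB]].
exists [set x in xs]; last by rewrite cardsE (card_uniqP uniq_xs).
by apply/subsetP => x; rewrite inE => /xsB.
Qed.

Lemma setD_disjointUl (T : finType) (B X Y : {set T}) :
  [disjoint B & X] -> B :\: (X :|: Y) = B :\: Y.
Proof.
move=> dBX; apply/setP => j; rewrite !inE; case: (boolP (j \in B)) => jB; rewrite ?andbF //.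
by rewrite (disjointFr dBX jB).
Qed.

Section Gap.
Variables (r : nat) (s : 'rV[int]_r) (B Pre : {set 'I_r}) (k : 'I_r) (sb : int).
Implicit Types (A P N X : {set 'I_r}) (t : int).
Hypothesis s_gt0 : forall i, 0 < s 0 i.
Hypothesis Pre_B : [disjoint Pre & B].
Hypothesis k_Pre : k \notin Pre.
Hypothesis k_B : k \notin B.
Hypothesis s_B : forall j, j \in B -> s 0 j = sb.
Hypothesis Pre_sums : forall t, 0 <= t < sb ->
  exists2 P : {set 'I_r}, P \subset Pre & \sum_(i in P) s 0 i = t.

Lemma sum_block A : A \subset B -> \sum_(i in A) s 0 i = #|A|%:R * sb.
Proof.
move=> AB; rewrite (eq_bigr (fun=> sb)) => [|j jA]; last exact/s_B/(subsetP AB).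
by rewrite sumr_const mulr_natl.
Qed.

(* Write s_k = q sb + t with 0 <= t < sb and 1 <= q <= |B| - 2.  If q = 1,
   balance k and prefix coordinates of total sb - t against two block
   coordinates; if q >= 2, balance k against q block coordinates and prefix
   coordinates of total t. *)
Lemma gap_minimal_balanced :
  (3 < #|B|)%N -> sb < s 0 k -> s 0 k < (#|B|.-1)%:R * sb ->
  exists P N, [/\ minimal_balanced s P N, (1 < #|B :&: N|)%N
                & (1 < #|B :\: (P :|: N)|)%N].
Proof.
move=> B4 sb_k k_lt.
have [j0 j0B] : exists j, j \in B by apply/set0Pn; rewrite -card_gt0; lia.
have sb_gt0 : 0 < sb by rewrite -(s_B j0B).
have BPre X : X \subset Pre -> [disjoint B & X].
  by move=> XPre; apply: disjointWr XPre _; rewrite disjoint_sym.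
have Bk : [disjoint B & [set k]] by rewrite disjoint_sym disjoints1.
pose q := absz (divz (s 0 k) sb); pose t := modz (s 0 k) sb.
have k_div : s 0 k = q%:Z * sb + t.
  by rewrite gez0_abs; [exact: divz_eq | rewrite divz_ge0 // ltW].
have t_ge0 : 0 <= t by rewrite modz_ge0 ?gt_eqF.
have t_lt : t < sb by rewrite ltz_pmod.
clearbody q t.
have q_ge1 : (1 <= q)%N.
  by rewrite lt0n; apply/negP => /eqP q0; move: k_div sb_k; rewrite q0 mul0r add0r => ->; lia.
have q_le : (q.+2 <= #|B|)%N.
  rewrite leqNgt; apply/negP => Bq.
  have : (#|B|.-1)%:R * sb <= q%:Z * sb by rewrite ler_pM2r // -natz ler_nat; lia.
  by move: k_lt; rewrite k_div; lia.
have B_kPre X : X \subset Pre -> [disjoint k |: X & B].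
  move=> XPre; rewrite -setI_eq0; apply/eqP/setP => j; rewrite !inE.
  case: (boolP (j \in B)) => jB; rewrite ?andbF // andbT.
  apply/negP => /predU1P [ejk | jX]; first by move: k_B; rewrite -ejk jB.
  by move: (disjointFr Pre_B (subsetP XPre j jX)); rewrite jB.
have [q1 | q2] : q = 1%N \/ (2 <= q)%N by lia.
  have t_gt0 : 0 < t.
    by move: k_div sb_k; rewrite q1 mul1r => ->; lia.
  have [P PPre sP] : exists2 P : {set 'I_r}, P \subset Pre & \sum_(i in P) s 0 i = sb - t.
    by apply: (Pre_sums (t := sb - t)); apply/andP; split; lia.
  have [A AB cardA] : exists2 A : {set 'I_r}, A \subset B & #|A| = 2%N.
    by apply: exists_subset_card; lia.
  have kP : k \notin P by apply: contra k_Pre; apply: (subsetP PPre).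
  exists (k |: P), A; split.
  - apply: (minimal_balancedU1 s_gt0) => // [||j jA|j jA].
    + by rewrite disjoint_sym; apply: disjointWl AB _; rewrite disjoint_sym B_kPre.
    + by rewrite big_setU1 //= sP sum_block // cardA k_div q1 mul1r; ring.
    + by rewrite sum_block // cardA (s_B (subsetP AB j jA)) k_div q1 mul1r; lia.
    + by rewrite sP (s_B (subsetP AB j jA)); lia.
  - by rewrite (setIidPr AB) cardA.
  - rewrite setD_disjointUl; last by rewrite disjoint_sym B_kPre.
    by rewrite cardsD (setIidPr AB) cardA; lia.
have [P PPre sP] : exists2 P : {set 'I_r}, P \subset Pre & \sum_(i in P) s 0 i = t.
  by apply: Pre_sums; rewrite t_ge0 t_lt.
have [A AB cardA] : exists2 A : {set 'I_r}, A \subset B & #|A| = q.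
  by apply: exists_subset_card; lia.
have BP : [disjoint B & P] by rewrite disjoint_sym; apply: disjointWl PPre Pre_B.
have PA : [disjoint P & A] by rewrite disjoint_sym (disjointWl AB BP).
have sumN : \sum_(i in A :|: P) s 0 i = s 0 k.
  rewrite (big_setID A) /= setUK setDUl setDv set0U (setDidPl PA) sP sum_block //.
  by rewrite cardA k_div natz.
have := minimal_balancedU1 s_gt0 (k := k) (P := set0) (N := A :|: P); rewrite setU0 => mb.
have BN : B :&: (A :|: P) = A.
  by rewrite setIUr (setIidPr AB) (disjoint_setI0 BP) setU0.
exists [set k], (A :|: P); split.
- apply: mb => [|||j jN|j jN].
  + by rewrite inE.
  + rewrite disjoints1 !inE negb_or.
    by rewrite (contra (subsetP AB k) k_B) (contra (subsetP PPre k) k_Pre).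
  + by rewrite big_set1 sumN.
  + by rewrite sumN; have := s_gt0 j; lia.
  + by rewrite big_set0.
- by rewrite BN cardA; lia.
- rewrite setD_disjointUl; last by rewrite disjoint_sym disjoints1.
  by rewrite cardsD BN cardA; lia.
Qed.

End Gap.

Lemma coord1E r (s : 'rV[int]_r) i (lt_ir : (i.-1 < r)%N) :
  (0 < i)%N -> coord1 s i = s 0 (Ordinal lt_ir).
Proof. by move=> i_gt0; rewrite -coord1_ord /= prednK. Qed.

Lemma card_ord_interval r m l : (m + l <= r)%N ->
  #|[set j : 'I_r | (m <= j < m + l)%N]| = l.
Proof.
elim: l => [|l IH] mlr.
  by apply/eqP; rewrite cards_eq0; apply/eqP/setP => j; rewrite !inE addn0; lia.
have lt_mlr : (m + l < r)%N by lia.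
have -> : [set j : 'I_r | (m <= j < m + l.+1)%N] =
          Ordinal lt_mlr |: [set j : 'I_r | (m <= j < m + l)%N].
  by apply/setP => j; rewrite !inE -val_eqE /=; lia.
by rewrite cardsU1 IH ?inE /=; lia.
Qed.

Lemma changemaker_block_gap r (s : 'rV[int]_r) n (v : 'I_n.+1 -> 'rV[int]_r)
    m l (k : 'I_r) (sb : int) :
  changemaker s -> obtuse_superbase_perp s v -> (3 < l)%N -> (m + l <= r)%N ->
  (forall j : 'I_r, (m <= j < m + l)%N -> s 0 j = sb) ->
  sb < s 0 k -> (l.-1)%:R * sb <= s 0 k.
Proof.
move=> cm [perp_v span_v _ obtuse_v sum_v] l4 mlr s_blk sb_k.
have [mono s_gt0 prefix] := changemaker_ord cm.
pose B := [set j : 'I_r | (m <= j < m + l)%N]; pose Pre := [set j : 'I_r | (j < m)%N].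
have s_B j : j \in B -> s 0 j = sb by rewrite inE => /s_blk.
have lt_mr : (m < r)%N by lia.
have Pre_B : [disjoint Pre & B] by rewrite -setI_eq0; apply/eqP/setP => j; rewrite !inE; lia.
have k_out : (m + l <= k)%N.
  rewrite leqNgt; apply/negP => lt_kml; have lt_last : ((m + l).-1 < r)%N by lia.
  have : s 0 k <= sb.
    by rewrite -(s_blk (Ordinal lt_last)) /=; [apply: mono => /=; lia | lia].
  by rewrite leNgt sb_k.
have Pre_sums t : 0 <= t < sb ->
    exists2 P : {set 'I_r}, P \subset Pre & \sum_(i in P) s 0 i = t.
  move=> /andP [t_ge0 t_lt]; apply: (prefix_subset_sum prefix (ltnW lt_mr)).
  have := prefix (Ordinal lt_mr); rewrite s_blk /= ?leqnn; last by lia.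
  by rewrite t_ge0 /=; move: (\sum_(i < r | _) _) => S; lia.
have card_B : #|B| = l by apply: card_ord_interval.
rewrite leNgt; apply/negP => k_lt.
have [||||P [N [mb BN BPN]]] := gap_minimal_balanced s_gt0 Pre_B _ _ s_B Pre_sums _ sb_k _.
- by rewrite inE; lia.
- by rewrite inE; lia.
- by rewrite card_B.
- by rewrite card_B.
exact: (no_minimal_balanced_block_split sum_v obtuse_v perp_v span_v s_gt0
  (B := B) (P := P) (N := N) s_B mb BN BPN).
Qed.

Theorem proposition6p2 (r : nat) (s : 'rV[int]_r) (l b : nat) :
  changemaker s ->
  has_obtuse_superbase_perp s ->
  (4 <= l)%N -> (1 < b)%N -> (b + l - 1 <= r)%N ->
  coord1 s b.-1 < coord1 s b ->
  (forall i : nat, (b <= i <= b + l - 1)%N -> coord1 s i = coord1 s b) ->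
  forall k : nat, (1 <= k <= r)%N -> coord1 s b < coord1 s k ->
    (l.-1)%:R * coord1 s b <= coord1 s k.
Proof.
move=> cm [n [v sbase]] l4 b1 blr _ blk k /andP [k1 kr].
have lt_kr : (k.-1 < r)%N by lia.
rewrite (coord1E s lt_kr) //.
apply: (changemaker_block_gap (m := b.-1) cm sbase) => // [|j jb]; first by lia.
by rewrite -coord1_ord blk //; lia.
Qed.
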